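(* Let $G=(V,E)$ be a graph with nonnegative edge lengths $l_e$, root $r$, and integer demands $d_v>0$ on a set of demand nodes, with total demand $D$. Fix $\epsilon>0$, $\gamma>1$, $\delta>1$, let $K=\lceil \log_{1+\epsilon} D\rceil$, $M_i=(1+\epsilon)^i$, $A_i(x)=\min\{x,M_i\}$, and let $T_i^*$ be an optimal routing tree for $A_i$ with rent cost $R_i^*$ and normalized buy cost $B_i^*$ ($0\le i\le K$). Run the following procedure: (1) for each $i$ let $T_i$ be a routing tree returned by an SSRoB approximation algorithm for cost function $A_i$; (2) for $i=1,\dots,K$ in increasing order, if $A_i(T_{i-1})<A_i(T_i)$ set $T_i\leftarrow T_{i-1}$; (3) for $i=K-1,\dots,0$ in decreasing order, if $A_i(T_{i+1})<A_i(T_i)$ set $T_i\leftarrow T_{i+1}$; (4) compute the rent cost $R_i$ and normalized buy cost $B_i$ of each resulting $T_i$; (5) set $L_B=\emptyset$, $B=\infty$, and for $i=0,\dots,K$ in increasing order, if $B_i<B/\gamma$ then add $i$ to $L_B$ and set $B\leftarrow B_i$; (6) set $L=\emptyset$, $R=\infty$, and for each $i\in L_B$ in decreasing order, if $R_i<R/\delta$ then add $i$ to $L$ and set $R\leftarrow R_i$. Suppose there exist a routing tree $T$ and constants $c_B,c_R$ such that for every $i\in L$ there is a partition of the edges of $T$ into two sets $T_{B_i}$ and $T_{R_i}$ with $A_0(T_{B_i})\le c_B B_i$ and $A_K(T_{R_i})\le c_R R_i$, and suppose that for all $i$, $R_i\le \mu_R R_i^*+\mu_B M_iB_i^*$ and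 $M_iB_i\le \nu_R R_i^*+\nu_B M_iB_i^*$. Then for all $k\in\{0,\dots,K\}$, $A_k(T)\le \max\{c_R\delta\mu_R+c_B\gamma\nu_R,\; c_R\delta\mu_B+c_B\gamma\nu_B\}\,A_k(T_k^* )$.
   Context: A routing tree is a tree in $G$ containing $r$ and all demand nodes; each demand node $v$ sends $d_v$ units of flow to $r$ along its unique tree path, and $x_e$ denotes the total flow on edge $e$. For a function $f$ and a routing tree $T$, $f(T)=\sum_{e\in T} l_e f(x_e)$; for a subset $S$ of edges of $T$, $f(S)=\sum_{e\in S} l_e f(x_e)$ with $x_e$ the flows in $T$. The single-sink rent-or-buy (SSRoB) problem with parameter $M$ is to find a routing tree minimizing $A(T)$ for $A(x)=\min\{x,M\}$. For a routing tree $T_i$ with flows $x_e$, its rent cost is $R_i=\sum_{e\in T_i,\,x_e<M_i} l_e A_i(x_e)$ and its normalized buy cost is $B_i=\sum_{e\in T_i,\,x_e\ge M_i} l_e$. *)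

From HB Require Import structures.
From mathcomp Require Import all_boot all_order all_algebra.
From mathcomp Require Import all_classical all_reals exp.
Set Implicit Arguments. Unset Strict Implicit. Unset Printing Implicit Defensive.
Import Order.TTheory GRing.Theory Num.Theory.
Local Open Scope ring_scope.

(* Graph G = (V,E): edges e : E with endpoints ends e (undirected; parallel
   edges allowed).  Root r, demand node set Dn, demands d, lengths l. *)
Section SSRoB.
Variables (R : realType) (V E : finType) (ends : E -> V * V) (r : V)
  (Dn : {set V}) (d : V -> nat) (l : E -> R).

Definition adj (S : {set E}) : rel V :=
  fun u w => [exists e in S, (ends e == (u, w)) || (ends e == (w, u))].
Definition conn (S : {set E}) (u w : V) : bool := connect (adj S) u w.

(* T is a tree (connected, acyclic) whose vertex set contains r and all
   demand nodes *)
Definition routing_tree (T : {set E}) : bool :=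
  [&& [forall v in Dn, conn T v r],
      [forall e in T, conn T (ends e).1 r && conn T (ends e).2 r] &
      [forall e in T, ~~ conn (T :\ e) (ends e).1 (ends e).2]].

(* flow on edge e of tree T: total demand of the demand nodes whose tree path
   to r uses e, i.e. that are separated from r when e is removed *)
Definition flow (T : {set E}) (e : E) : nat :=
  \sum_(v in Dn | ~~ conn (T :\ e) v r) d v.

Definition Acost (M : R) (T S : {set E}) : R :=
  \sum_(e in S) l e * Num.min (flow T e)%:R M.
Definition rent (M : R) (T : {set E}) : R :=
  \sum_(e in T | (flow T e)%:R < M) l e * Num.min (flow T e)%:R M.
Definition nbuy (M : R) (T : {set E}) : R :=
  \sum_(e in T | M <= (flow T e)%:R) l e.

Definition totD : nat := \sum_(v in Dn) d v.

Definition Kof (eps : R) : nat := `|Num.ceil (ln (totD%:R) / ln (1 + eps))|%N.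
Definition Mof (eps : R) (i : nat) : R := (1 + eps) ^+ i.

Variables (M : nat -> R) (K : nat) (T0 : nat -> {set E}).

Fixpoint fwd (i : nat) : {set E} :=
  match i with
  | 0 => T0 0
  | i'.+1 => let Tp := fwd i' in
      if Acost (M i) Tp Tp < Acost (M i) (T0 i) (T0 i) then Tp else T0 i
  end.

(* step (3): bwd_aux j is the tree at index K - j *)
Fixpoint bwd_aux (j : nat) : {set E} :=
  match j with
  | 0 => fwd K
  | j'.+1 => let i := (K - j'.+1)%N in let Tn := bwd_aux j' in
      if Acost (M i) Tn Tn < Acost (M i) (fwd i) (fwd i) then Tn else fwd i
  end.

Definition Tfin (i : nat) : {set E} := bwd_aux (K - i).

Definition Bfin (i : nat) : R := nbuy (M i) (Tfin i).
Definition Rfin (i : nat) : R := rent (M i) (Tfin i).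

(* one step of the threshold scan; None encodes the initial value infinity *)
Definition scan_step (c : R) (F : nat -> R) (st : seq nat * option R) (i : nat)
  : seq nat * option R :=
  let: (s, b) := st in
  if (if b is Some b' then F i < b' / c else true) then (rcons s i, Some (F i))
  else st.

Definition LB (gam : R) : seq nat :=
  (foldl (scan_step gam Bfin) ([::], None) (iota 0 K.+1)).1.
Definition Lset (gam del : R) : seq nat :=
  (foldl (scan_step del Rfin) ([::], None) (rev (LB gam))).1.

End SSRoB.

From HB Require Import structures.
From mathcomp Require Import all_boot all_order all_algebra.
From mathcomp Require Import all_classical all_reals exp.
From mathcomp Require Import lra.
Set Implicit Arguments. Unset Strict Implicit. Unset Printing Implicit Defensive.
Import Order.TTheory GRing.Theory Num.Theory.
Local Open Scope ring_scope.

(* After the two passes, T_i is at least as cheap as T_(i+1) under A_i, and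
   T_(i+1) at least as cheap as T_i under A_(i+1).  Since A_N(T) <= R_M(T) + N B_M(T)
   with equality at N = M, the lines N |-> R_i + N B_i and N |-> R_(i+1) + N B_(i+1)
   are ordered one way at M_i and the other way at M_(i+1); hence R_i is
   nondecreasing and B_i nonincreasing in i.  Given k, the scan building L_B
   yields i1 <= k with B_i1 <= gam B_k, and the scan building L yields i2 >= i1
   in L with R_i2 <= del R_i1; by monotonicity B_i2 <= gam B_k and
   R_i2 <= del R_k.  Splitting T as for i2 gives
   A_k(T) <= c_B gam M_k B_k + c_R del R_k, and the bounds on R_k and M_k B_k
   turn this into the claim, since A_k(T*_k) = R*_k + M_k B*_k. *)

Section ThresholdScan.
Variables (R : realType) (c : R) (F : nat -> R).

Definition scan_consistent (st : seq nat * option R) : Prop :=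
  forall b, st.2 = Some b -> exists2 y, y \in st.1 & b = F y.

Lemma scan_fold_cat st s :
  exists2 t, (foldl (scan_step c F) st s).1 = st.1 ++ t & subseq t s.
Proof.
elim: s st => [|x s IH] [o ob] /=; first by exists [::]; rewrite ?cats0.
have [t -> sub_ts] := IH (scan_step c F (o, ob) x).
rewrite /scan_step; case: ifP => _ /=.
- by exists (x :: t); rewrite ?cat_rcons //= eqxx.
- by exists t => //; apply: subseq_trans sub_ts (subseq_cons s x).
Qed.

Lemma scan_subseq s : subseq (foldl (scan_step c F) ([::], None) s).1 s.
Proof. by have [t -> sub_ts] := scan_fold_cat ([::], None) s. Qed.

Lemma scan_stepP st x : 0 < c -> scan_consistent st ->
  scan_step c F st x = (rcons st.1 x, Some (F x)) \/
  scan_step c F st x = st /\ exists2 y, y \in st.1 & F y <= c * F x.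
Proof.
move=> c_gt0; case: st => o [b|] st_cons /=; last by left.
case: ifP => [_|/negbT]; first by left.
rewrite -leNgt ler_pdivrMr // mulrC => b_le; right; split => //.
by have [y yo b_eq] := st_cons b erefl; exists y; rewrite -?b_eq.
Qed.

Hypotheses (c_ge1 : 1 <= c) (F_ge0 : forall i, 0 <= F i).
Variable ord : rel nat.
Hypotheses (ord_refl : reflexive ord) (ord_trans : transitive ord).

Lemma scan_fold_cover st s : sorted ord s -> scan_consistent st ->
  forall x, x \in s -> exists2 y, y \in (foldl (scan_step c F) st s).1 &
    F y <= c * F x /\ (y \in st.1 \/ ord y x).
Proof.
have c_gt0 : 0 < c by apply: lt_le_trans c_ge1.
elim: s st => [|x s IH] st //= sorted_xs st_cons z.
have sorted_s := path_sorted sorted_xs.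
have x_min : all (ord x) s by apply: order_path_min.
set st' := scan_step c F st x.
have in_fold y : y \in st'.1 -> y \in (foldl (scan_step c F) st' s).1.
  by have [t -> _] := scan_fold_cat st' s; rewrite mem_cat => ->.
rewrite in_cons => /predU1P[->|zs].
  have [st'E|[st'E [y yo Fy]]] := scan_stepP x c_gt0 st_cons.
  - exists x; first by apply: in_fold; rewrite /st' st'E mem_rcons mem_head.
    by split; [rewrite ler_peMl | right].
  - by exists y; [apply: in_fold; rewrite /st' st'E | split; [|left]].
have [st'E|[st'E _]] := scan_stepP x c_gt0 st_cons; last first.
  by rewrite /st' st'E; apply: IH.
have st'_cons : scan_consistent st'.
  by rewrite /st' st'E => b [<-]; exists x; rewrite // mem_rcons mem_head.
have [y y_in [Fy y_ord]] := IH _ sorted_s st'_cons z zs.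
exists y => //; split => //; case: y_ord => [|]; last by right.
rewrite /st' st'E mem_rcons in_cons => /predU1P[->|]; last by left.
by right; apply: (allP x_min).
Qed.

Lemma scan_cover s : sorted ord s -> forall x, x \in s ->
  exists2 y, y \in (foldl (scan_step c F) ([::], None) s).1 &
    F y <= c * F x /\ ord y x.
Proof.
move=> sorted_s x xs; have nil_cons : scan_consistent ([::], None) by [].
by have [y y_in [Fy [//|y_ord]]] := scan_fold_cover sorted_s nil_cons xs; exists y.
Qed.

End ThresholdScan.

Section TreeCost.
Context {R : realType} {V E : finType} {ends : E -> V * V} {r : V}
  {Dn : {set V}} {d : V -> nat} {l : E -> R}.
Local Notation A := (Acost ends r Dn d l).
Local Notation x_ T e := (flow ends r Dn d T e)%:R.

Lemma Acost_rent_nbuy M T :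
  A M T T = rent ends r Dn d l M T + M * nbuy ends r Dn d l M T.
Proof.
rewrite /Acost /rent /nbuy (bigID (fun e => x_ T e < M)) /= big_distrr /=.
congr (_ + _); apply: eq_big => [e|e /andP[_]]; first by rewrite -leNgt.
by rewrite -leNgt => M_le; rewrite min_r // mulrC.
Qed.

Lemma Acost_setU M T (S1 S2 : {set E}) : [disjoint S1 & S2] ->
  A M T (S1 :|: S2) = A M T S1 + A M T S2.
Proof.
move=> dis; rewrite /Acost -bigU //=.
by apply: eq_bigl => e; rewrite !inE.
Qed.

Hypothesis l_ge0 : forall e, 0 <= l e.

Lemma rent_ge0 M T : 0 <= M -> 0 <= rent ends r Dn d l M T.
Proof. by move=> M_ge0; apply: sumr_ge0 => e _; rewrite mulr_ge0 // le_min ler0n. Qed.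

Lemma nbuy_ge0 M T : 0 <= nbuy ends r Dn d l M T.
Proof. by apply: sumr_ge0 => e _. Qed.

Lemma Acost_le_rent_nbuy M N T :
  A N T T <= rent ends r Dn d l M T + N * nbuy ends r Dn d l M T.
Proof.
rewrite /Acost /rent /nbuy (bigID (fun e => x_ T e < M)) /= big_distrr /=.
apply: lerD; first apply: ler_sum => e /andP[_ flow_M].
  by apply: ler_wpM2l; rewrite // (min_l (ltW flow_M)) ge_min lexx.
under eq_bigl => e do rewrite -leNgt.
by apply: ler_sum => e _; rewrite [N * _]mulrC; apply: ler_wpM2l; rewrite // ge_min lexx orbT.
Qed.

Lemma le_Acost M N T S : M <= N -> A M T S <= A N T S.
Proof.
move=> M_le_N; apply: ler_sum => e _; apply: ler_wpM2l => //.
by rewrite le_min !ge_min lexx M_le_N orbT.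
Qed.

Lemma Acost_le_scale M T S : 1 <= M -> A M T S <= M * A 1 T S.
Proof.
move=> M_ge1; rewrite /Acost big_distrr /=; apply: ler_sum => e _.
rewrite mulrCA; apply: ler_wpM2l => //; case: (flow _ _ _ _ T e) => [|n].
  by rewrite !min_l ?mulr0 // (le_trans ler01).
by rewrite [Num.min _ 1]min_r ?mulr1 ?ge_min ?lexx ?orbT // ler1n.
Qed.

End TreeCost.

Lemma affine_crossing (R : realDomainType) (a b r1 r2 s1 s2 : R) :
  0 <= a -> a < b -> r1 + a * s1 <= r2 + a * s2 -> r2 + b * s2 <= r1 + b * s1 ->
  r1 <= r2 /\ s2 <= s1.
Proof. move=> a_ge0 a_lt_b le_a le_b; have s_le : s2 <= s1 by nra. by split; nra. Qed.

Lemma lerD_max_mul (R : realDomainType) (g h u1 u2 w1 w2 s t : R) :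
  0 <= g -> 0 <= h -> 0 <= s -> 0 <= t ->
  g * (u1 * s + u2 * t) + h * (w1 * s + w2 * t) <=
  Num.max (g * u1 + h * w1) (g * u2 + h * w2) * (s + t).
Proof.
move=> g_ge0 h_ge0 s_ge0 t_ge0.
have m1 : g * u1 + h * w1 <= Num.max (g * u1 + h * w1) (g * u2 + h * w2) by rewrite le_max lexx.
have m2 : g * u2 + h * w2 <= Num.max (g * u1 + h * w1) (g * u2 + h * w2) by rewrite le_max lexx orbT.
move: m1 m2; set m := Num.max _ _ => m1 m2; nra.
Qed.

Section Passes.
Context {R : realType} {V E : finType} {ends : E -> V * V} {r : V}
  {Dn : {set V}} {d : V -> nat} {l : E -> R}
  {M : nat -> R} {K : nat} {T0 : nat -> {set E}}.
Local Notation A i X := (Acost ends r Dn d l (M i) X X).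
Local Notation fw := (fwd ends r Dn d l M T0).
Local Notation Tf := (Tfin ends r Dn d l M K T0).
Local Notation Ri i := (rent ends r Dn d l (M i) (Tf i)).
Local Notation Bi i := (nbuy ends r Dn d l (M i) (Tf i)).

Lemma fwd_succ_le i : A i.+1 (fw i.+1) <= A i.+1 (fw i).
Proof. by rewrite /=; case: ifP => // /negbT; rewrite -leNgt. Qed.

Lemma TfinS i : (i < K)%N ->
  Tf i = if A i (Tf i.+1) < A i (fw i) then Tf i.+1 else fw i.
Proof. by move=> i_lt_K; rewrite /Tfin -subnSK //= subnSK // subKn // ltnW. Qed.

Lemma Tfin_le_fwd i : (i <= K)%N -> A i (Tf i) <= A i (fw i).
Proof.
rewrite leq_eqVlt => /predU1P[->|i_lt_K]; first by rewrite /Tfin subnn.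
by rewrite TfinS //; case: ifP => // /ltW.
Qed.

Lemma Tfin_le_succ i : (i < K)%N -> A i (Tf i) <= A i (Tf i.+1).
Proof. by move=> i_lt_K; rewrite TfinS //; case: ifP => // /negbT; rewrite -leNgt. Qed.

Lemma Tfin_succ_le i : (i < K)%N -> A i.+1 (Tf i.+1) <= A i.+1 (Tf i).
Proof.
move=> i_lt_K; rewrite [Tf i]TfinS //; case: ifP => // _.
exact: le_trans (Tfin_le_fwd i_lt_K) (fwd_succ_le i).
Qed.

Hypotheses (l_ge0 : forall e, 0 <= l e)
  (M_ge0 : forall i, 0 <= M i) (M_lt : forall i, M i < M i.+1).

Lemma Tfin_rent_nbuy_succ i : (i < K)%N -> Ri i <= Ri i.+1 /\ Bi i.+1 <= Bi i.
Proof.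
move=> i_lt_K; apply: (affine_crossing (M_ge0 i) (M_lt i)); rewrite -Acost_rent_nbuy.
  by apply: le_trans (Tfin_le_succ i_lt_K) _; apply: Acost_le_rent_nbuy.
by apply: le_trans (Tfin_succ_le i_lt_K) _; apply: Acost_le_rent_nbuy.
Qed.

Let below_K := [pred i : nat | (i <= K)%N].

Let below_K_convex : {in below_K &, forall i j k, (i < k < j)%N -> k \in below_K}.
Proof. by move=> i j _ j_le_K k /andP[_ /ltnW k_le_j]; apply: leq_trans j_le_K. Qed.

Lemma Tfin_rent_homo i j : (i <= j <= K)%N -> Ri i <= Ri j.
Proof.
move=> /andP[i_le_j j_le_K].
have step : {in below_K, forall k, k.+1 \in below_K -> Ri k <= Ri k.+1}.
  by move=> k _ k_lt_K; have [] := Tfin_rent_nbuy_succ k_lt_K.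
apply: (homo_leq_in lexx le_trans below_K_convex step) => //.
exact: leq_trans j_le_K.
Qed.

Lemma Tfin_nbuy_homo i j : (i <= j <= K)%N -> Bi j <= Bi i.
Proof.
move=> /andP[i_le_j j_le_K].
have step : {in below_K, forall k, k.+1 \in below_K -> Bi k.+1 <= Bi k}.
  by move=> k _ k_lt_K; have [] := Tfin_rent_nbuy_succ k_lt_K.
have ge_trans (y x z : R) : y <= x -> z <= y -> z <= x by move=> yx zy; apply: le_trans zy yx.
apply: (homo_leq_in (f := fun k => Bi k) lexx ge_trans below_K_convex step) => //.
exact: leq_trans j_le_K.
Qed.

Variables (gam del : R).
Hypotheses (gam_gt1 : 1 < gam) (del_gt1 : 1 < del).
Local Notation LB := (LB ends r Dn d l M K T0 gam).
Local Notation L := (Lset ends r Dn d l M K T0 gam del).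

Lemma LB_sub_iota : subseq LB (iota 0 K.+1).
Proof. exact: scan_subseq. Qed.

Lemma Lset_le_K i : i \in L -> (i <= K)%N.
Proof.
move=> /(mem_subseq (scan_subseq _ _ _)); rewrite mem_rev.
by move=> /(mem_subseq LB_sub_iota); rewrite mem_iota.
Qed.

Lemma LB_cover k : (k <= K)%N ->
  exists2 i, i \in LB & (i <= k)%N /\ Bi i <= gam * Bi k.
Proof.
move=> k_le_K; have k_in : k \in iota 0 K.+1 by rewrite mem_iota.
have [i i_LB [Bi_le i_le_k]] := scan_cover (F := Bfin ends r Dn d l M K T0)
  (ltW gam_gt1) (fun i => nbuy_ge0 l_ge0 _ _) leqnn leq_trans (iota_sorted 0 K.+1) k_in.
by exists i.
Qed.

Lemma Lset_cover_LB i : i \in LB ->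
  exists2 j, j \in L & (i <= j)%N /\ Ri j <= del * Ri i.
Proof.
move=> i_LB; have i_in : i \in rev LB by rewrite mem_rev.
have LB_sorted : sorted geq (rev LB).
  by rewrite rev_sorted; exact: (subseq_sorted leq_trans LB_sub_iota (iota_sorted 0 K.+1)).
have geq_trans : transitive geq by move=> y x z /= yx zy; apply: leq_trans zy yx.
have [j j_L [Rj_le i_le_j]] := scan_cover (F := Rfin ends r Dn d l M K T0) (ltW del_gt1)
  (fun i => rent_ge0 l_ge0 _ (M_ge0 i)) (ord := geq) leqnn geq_trans LB_sorted i_in.
by exists j.
Qed.

Lemma Lset_cover k : (k <= K)%N ->
  exists2 i, i \in L & Bi i <= gam * Bi k /\ Ri i <= del * Ri k.
Proof.
move=> k_le_K; have [i1 i1_LB [i1_le_k Bi1_le]] := LB_cover k_le_K.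
have [i2 i2_L [i1_le_i2 Ri2_le]] := Lset_cover_LB i1_LB.
exists i2 => //; split.
  by apply: le_trans Bi1_le; apply: Tfin_nbuy_homo; rewrite i1_le_i2 Lset_le_K.
apply: le_trans Ri2_le _; rewrite ler_pM2l ?(lt_trans ltr01) //.
by apply: Tfin_rent_homo; rewrite i1_le_k.
Qed.

End Passes.

Lemma Mof_ge1 (R : realType) (eps : R) i : 0 <= eps -> 1 <= Mof eps i.
Proof. by move=> eps_ge0; rewrite exprn_ege1 // lerDl. Qed.

Lemma ler_Mof (R : realType) (eps : R) i j : 0 < eps -> (i <= j)%N -> Mof eps i <= Mof eps j.
Proof. by move=> eps_gt0; rewrite /Mof ler_eXn2l // ltrDl. Qed.

Lemma Mof_ltS (R : realType) (eps : R) i : 0 < eps -> Mof eps i < Mof eps i.+1.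
Proof. by move=> eps_gt0; rewrite /Mof ltr_eXn2l // ltrDl. Qed.

Theorem corollary6 (R : realType) (V E : finType) (ends : E -> V * V) (r : V)
  (Dn : {set V}) (d : V -> nat) (l : E -> R) (eps gam del : R)
  (T0 Topt : nat -> {set E}) (T : {set E})
  (cB cR muR muB nuR nuB : R) :
  (forall e, 0 <= l e) ->
  (forall v, v \in Dn -> (0 < d v)%N) ->
  0 < eps -> 1 < gam -> 1 < del ->
  0 <= cB -> 0 <= cR -> 0 <= muR -> 0 <= muB -> 0 <= nuR -> 0 <= nuB ->
  let K := Kof Dn d eps in
  let M := Mof eps in
  let RT := routing_tree ends r Dn in
  let A := Acost ends r Dn d l in
  (forall i, (i <= K)%N -> RT (Topt i) /\
     forall T', RT T' -> A (M i) (Topt i) (Topt i) <= A (M i) T' T') ->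
  (forall i, (i <= K)%N -> RT (T0 i)) ->
  let Tf := Tfin ends r Dn d l M K T0 in
  let Ri := fun i => rent ends r Dn d l (M i) (Tf i) in
  let Bi := fun i => nbuy ends r Dn d l (M i) (Tf i) in
  let Rs := fun i => rent ends r Dn d l (M i) (Topt i) in
  let Bs := fun i => nbuy ends r Dn d l (M i) (Topt i) in
  let L := Lset ends r Dn d l M K T0 gam del in
  RT T ->
  (forall i, i \in L -> exists TB TR : {set E},
     [/\ TB :|: TR = T, [disjoint TB & TR],
         A (M 0%N) T TB <= cB * Bi i & A (M K) T TR <= cR * Ri i]) ->
  (forall i, (i <= K)%N -> Ri i <= muR * Rs i + muB * (M i * Bs i)) ->
  (forall i, (i <= K)%N -> M i * Bi i <= nuR * Rs i + nuB * (M i * Bs i)) ->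
  forall k, (k <= K)%N ->
    A (M k) T T <= Num.max (cR * del * muR + cB * gam * nuR)
                           (cR * del * muB + cB * gam * nuB)
                   * A (M k) (Topt k) (Topt k).
Proof.
move=> l_ge0 _ eps_gt0 gam_gt1 del_gt1 cB_ge0 cR_ge0 muR_ge0 muB_ge0 nuR_ge0 nuB_ge0
  K M RT A _ _ Tf Ri Bi Rs Bs L _ split_T Ri_le Bi_le k k_le_K.
have M_ge0 i : 0 <= M i by apply: le_trans (Mof_ge1 _ (ltW eps_gt0)).
have M_ltS i : M i < M i.+1 by apply: Mof_ltS.
have [i i_L [Bi_le_k Ri_le_k]] :
    exists2 i, i \in L & Bi i <= gam * Bi k /\ Ri i <= del * Ri k.
  exact: Lset_cover.
have [TB [TR [TBR_T TB_TR_dis TB_le TR_le]]] := split_T i i_L.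
have TB_cost : A (M k) T TB <= M k * (cB * Bi i).
  apply: le_trans (Acost_le_scale l_ge0 T TB (Mof_ge1 k (ltW eps_gt0))) _.
  by rewrite ler_wpM2l.
have TR_cost : A (M k) T TR <= cR * Ri i.
  by apply: le_trans TR_le; apply: le_Acost => //; apply: ler_Mof.
have rent_part : cR * Ri i <= cR * del * (muR * Rs k + muB * (M k * Bs k)).
  rewrite -mulrA ler_wpM2l //; apply: le_trans Ri_le_k _.
  by rewrite ler_pM2l ?(lt_trans ltr01) // Ri_le.
have buy_part : M k * (cB * Bi i) <= cB * gam * (nuR * Rs k + nuB * (M k * Bs k)).
  rewrite mulrCA -mulrA ler_wpM2l //; apply: le_trans (_ : _ <= gam * (M k * Bi k)) _.
    by rewrite mulrCA ler_wpM2l.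
  by rewrite ler_pM2l ?(lt_trans ltr01) // Bi_le.
rewrite -{2}TBR_T /A Acost_setU // Acost_rent_nbuy.
apply: le_trans (lerD TB_cost TR_cost) _; rewrite addrC.
apply: le_trans (lerD rent_part buy_part) _.
apply: lerD_max_mul; rewrite ?mulr_ge0 ?(rent_ge0 l_ge0) ?(nbuy_ge0 l_ge0) //.
  exact: le_trans (ltW del_gt1).
exact: le_trans (ltW gam_gt1).
Qed.
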